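(* Let $\mathbb{F}$ be a field, $d\geq3$ and $V$ a vector space over $\mathbb{F}$ of dimension $d+1$. Let $E^*_0,\dots,E^*_d$ be a system of mutually orthogonal idempotents in $\mathrm{End}(V)$ and $A\in\mathrm{End}(V)$ with $E^*_iAE^*_j=0$ if $|i-j|>1$ and $E^*_iAE^*_j\neq0$ if $|i-j|=1$. Assume $A$ is multiplicity-free and bipartite with primitive idempotents $E_0,\dots,E_d$ and eigenvalues $\theta_0,\dots,\theta_d$. Let $\theta^*_0,\dots,\theta^*_d\in\mathbb{F}$ be mutually distinct and $A^*=\sum_i\theta^*_iE^*_i$. Assume $E_0$ is normalizing and that in $\Delta$ the vertex $E_0$ is adjacent to $E_1$ and no other vertex. Fix a basis $v_0,\dots,v_d$ with $v_i\in E^*_iV$, and let $b_i,c_i,\alpha_i$ be as in the context. Then for $1\le i\le d-1$, $$b_i=\frac{\theta_1(\theta^*_i-\theta^*_0)-\theta_0(\theta^*_{i-1}-\theta^*_1)}{\theta^*_{i+1}-\theta^*_{i-1}}\cdot\frac{\alpha_i}{\alpha_{i+1}},\qquad c_i=\frac{\theta_0(\theta^*_{i+1}-\theta^*_1)-\theta_1(\theta^*_i-\theta^*_0)}{\theta^*_{i+1}-\theta^*_{i-1}}\cdot\frac{\alpha_i}{\alpha_{i-1}}.$$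
   Context: A system of mutually orthogonal idempotents: $E^*_iE^*_j=\delta_{ij}E^*_i$, $\operatorname{rank}E^*_i=1$. $A$ multiplicity-free: $d+1$ distinct eigenvalues in $\mathbb{F}$; $E_i$ is the projection onto the $\theta_i$-eigenspace along the other eigenspaces. Bipartite: $\operatorname{tr}(E^*_iA)=0$ for all $i$. $\Delta$: graph on $E_0,\dots,E_d$ with $E_i\neq E_j$ adjacent iff $E_iA^*E_j\neq0$. The matrix $Y$ representing $A$ w.r.t. a basis $v_0,\dots,v_d$ satisfies $Av_j=\sum_iY_{ij}v_i$. An eigenvalue $\theta$ is normalizing if some basis $v_i\in E^*_iV$ makes every row sum of the matrix representing $A$ equal to $\theta$; $E_i$ is normalizing if $\theta_i$ is. For the fixed basis $v_i\in E^*_iV$, the matrix of $A$ is tridiagonal with zero diagonal; $b_i$ ($0\le i\le d-1$) denotes its $(i,i+1)$-entry and $c_i$ ($1\le i\le d$) its $(i,i-1)$-entry (all nonzero); set $b_d=c_0=0$. The cosine sequence $\alpha_0,\dots,\alpha_d$ for $\theta_0$ is defined by $\alpha_0=1$ and $c_i\alpha_{i-1}+b_i\alpha_{i+1}=\theta_0\alpha_i$ for $0\le i\le d-1$; equivalently $\sum_i\alpha_iv_i$ is the eigenvector of $A$ for $\theta_0$ with $\alpha_0=1$. Since $E_0$ is normalizing, all $\alpha_i$ are nonzero. *)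

From HB Require Import structures.
From mathcomp Require Import all_boot all_order all_algebra.
Set Implicit Arguments. Unset Strict Implicit. Unset Printing Implicit Defensive.
Import Order.TTheory GRing.Theory.
Local Open Scope ring_scope.

(* V = F^(d+1) as column vectors; End(V) = 'M[F]_(d.+1), acting by A *m v. *)
Section Defs.
Variable F : fieldType.
Variable d : nat.
Local Notation M := 'M[F]_d.+1.
Local Notation I := 'I_d.+1.

Definition orth_rank1_idempotents (Es : I -> M) : Prop :=
  (forall i j, Es i *m Es j = if i == j then Es i else 0) /\
  (forall i, \rank (Es i) = 1%N).

(* A multiplicity free with eigenvalues th_0..th_d (distinct) and E_i the
   projection onto the th_i-eigenspace along the other eigenspaces:
   E_i are nonzero mutually orthogonal idempotents summing to 1 with
   A E_i = th_i E_i. *)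
Definition mult_free_prim_idem (A : M) (th : nat -> F) (E : I -> M) : Prop :=
  (forall i j : I, i != j -> th i != th j) /\
  (forall i j, E i *m E j = if i == j then E i else 0) /\
  (\sum_i E i = 1%:M) /\
  (forall i, E i != 0) /\
  (forall i, A *m E i = th i *: E i).

Definition bipartite (Es : I -> M) (A : M) : Prop :=
  forall i, \tr (Es i *m A) = 0.

Definition basis_mx (v : I -> 'cV[F]_d.+1) : M := \matrix_(k, j) v j k 0.

Definition Es_basis (Es : I -> M) (v : I -> 'cV[F]_d.+1) : Prop :=
  (forall i, Es i *m v i = v i) /\ basis_mx v \in unitmx.

(* Y represents A w.r.t. v: A v_j = sum_i Y_ij v_i *)
Definition represents (A : M) (v : I -> 'cV[F]_d.+1) (Y : M) : Prop :=
  A *m basis_mx v = basis_mx v *m Y.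

Definition normalizing (Es : I -> M) (A : M) (theta : F) : Prop :=
  exists v : I -> 'cV[F]_d.+1, exists Y : M,
    [/\ Es_basis Es v, represents A v Y & forall i, \sum_j Y i j = theta].

(* b_i = (i,i+1)-entry (b_d = 0), c_i = (i,i-1)-entry (c_0 = 0) *)
Definition bcoef (Y : M) (i : nat) : F :=
  if (i < d)%N then Y (inord i) (inord i.+1) else 0.
Definition ccoef (Y : M) (i : nat) : F :=
  if (0 < i <= d)%N then Y (inord i) (inord i.-1) else 0.

Definition cosine_seq (Y : M) (th0 : F) (al : nat -> F) : Prop :=
  al 0%N = 1 /\
  forall i : nat, (i < d)%N ->
    ccoef Y i * al i.-1 + bcoef Y i * al i.+1 = th0 * al i.

End Defs.

From HB Require Import structures.
From mathcomp Require Import all_boot all_order all_algebra.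
From mathcomp Require Import ring zify.
Import Order.TTheory GRing.Theory.
Local Open Scope ring_scope.
Set Implicit Arguments.
Unset Strict Implicit.
Unset Printing Implicit Defensive.

(* In the basis v the matrix A becomes the hollow tridiagonal matrix Y and
   A* the diagonal matrix D = diag(th*_0, ..., th*_d).  Since E_0 A* E_j = 0
   for j >= 2 and E_j (A - th_j) = 0, we get E_0 A* (A - th_1)(A - th_0) = 0,
   so a nonzero row x of the conjugate of E_0 is a left th_0-eigenvector of Y
   with x D (Y - th_1)(Y - th_0) = 0.  The diagonal symmetrizer K of Y
   (Y^T K = K Y) turns x into a right th_0-eigenvector, which is a multiple of
   the cosine vector alpha; hence (Y - th_1) D alpha is again a
   th_0-eigenvector, i.e. a multiple of alpha.  Its i-th entry and the cosine
   recurrence at i are two linear equations in b_i and c_i, whose solution is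
   the stated formula.  Normalizing is used only to see that no alpha_i
   vanishes. *)

Section MatrixUnits.
Variable F : fieldType.

Lemma mul_delta_mx_entry m n p (i : 'I_m) (j : 'I_n) (M : 'M[F]_(n, p)) k l :
  (delta_mx i j *m M) k l = (k == i)%:R * M j l.
Proof.
rewrite mxE (bigD1 j) //= mxE eqxx andbT big1 ?addr0 // => j' /negPf nj.
by rewrite mxE nj andbF mul0r.
Qed.

Lemma mul_mx_delta_entry m n p (i : 'I_n) (j : 'I_p) (M : 'M[F]_(m, n)) k l :
  (M *m delta_mx i j) k l = M k i * (l == j)%:R.
Proof.
rewrite mxE (bigD1 i) //= mxE eqxx /= big1 ?addr0 // => j' /negPf nj.
by rewrite mxE nj mulr0.
Qed.

Lemma delta_mx_conj n (M : 'M[F]_n) i j :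
  delta_mx i i *m M *m delta_mx j j = M i j *: delta_mx i j.
Proof.
apply/matrixP => k l; rewrite mul_mx_delta_entry mul_delta_mx_entry !mxE.
by case: (k == i); case: (l == j); rewrite /= ?mul1r ?mulr1 ?mul0r ?mulr0.
Qed.

Lemma conj_delta_mx_neq0 n (P : 'M[F]_n) i j :
  P \in unitmx -> P *m delta_mx i j *m invmx P != 0.
Proof.
move=> uP; apply/eqP => PdP0.
have : delta_mx i j = invmx P *m (P *m delta_mx i j *m invmx P) *m P.
  by rewrite !mulmxA mulmxKV // mulVmx // mul1mx.
rewrite PdP0 mulmx0 mul0mx => /matrixP /(_ i j); rewrite !mxE !eqxx /=.
by move/eqP; rewrite oner_eq0.
Qed.

Lemma delta_mx_mul_col_eq0 n (w : 'cV[F]_n) k :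
  (delta_mx k k *m w == 0) = (w k 0 == 0).
Proof.
apply/eqP/eqP => [/matrixP/(_ k 0)|wk0].
  by rewrite mul_delta_mx_entry eqxx mul1r mxE.
by apply/matrixP => a b; rewrite mul_delta_mx_entry ord1 wk0 mulr0 mxE.
Qed.

End MatrixUnits.

Definition hollow_tridiagonal (R : zmodType) n (Y : 'M[R]_n) :=
  forall i j : 'I_n, ~~ ((i.+1 == j) || (j.+1 == i)) -> Y i j = 0.

Section EsBasis.
Variables (F : fieldType) (d : nat).
Variables (Es : 'I_d.+1 -> 'M[F]_d.+1) (v : 'I_d.+1 -> 'cV[F]_d.+1).
Hypotheses (hEs : orth_rank1_idempotents Es) (hv : Es_basis Es v).
Local Notation P := (basis_mx v).

Lemma Es_mul_basis_mx i : Es i *m P = P *m delta_mx i i.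
Proof.
apply/matrixP => k j; rewrite mul_mx_delta_entry.
have -> : (Es i *m P) k j = (Es i *m v j) k 0.
  by rewrite !mxE; apply: eq_bigr => l _; rewrite mxE.
case: (eqVneq j i) => [->|nji]; first by rewrite hv.1 mulr1 mxE.
by rewrite -(hv.1 j) mulmxA hEs.1 eq_sym (negPf nji) mul0mx !mxE mulr0.
Qed.

Lemma Es_mul_coord_eq0 (w : 'cV[F]_d.+1) k :
  (Es k *m (P *m w) == 0) = (w k 0 == 0).
Proof.
rewrite mulmxA Es_mul_basis_mx -mulmxA -delta_mx_mul_col_eq0.
apply/eqP/eqP => [|->]; last by rewrite mulmx0.
by move/(congr1 (mulmx (invmx P))); rewrite mulKmx ?hv.2 // mulmx0.
Qed.

Lemma dual_mul_basis_mx (ths : nat -> F) :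
  (\sum_(i < d.+1) ths i *: Es i) *m P = P *m diag_mx (\row_i ths i).
Proof.
rewrite diag_mx_sum_delta mulmx_suml mulmx_sumr; apply: eq_bigr => k _.
by rewrite -scalemxAl Es_mul_basis_mx scalemxAr mxE.
Qed.

Variables (A Y : 'M[F]_d.+1).
Hypothesis hr : represents A v Y.

Lemma Es_A_Es_coord i j :
  Es i *m A *m Es j = Y i j *: (P *m delta_mx i j *m invmx P).
Proof.
have EAEP : Es i *m A *m Es j *m P = P *m (delta_mx i i *m Y *m delta_mx j j).
  rewrite -mulmxA Es_mul_basis_mx mulmxA -(mulmxA (Es i)) hr mulmxA.
  by rewrite Es_mul_basis_mx !mulmxA.
by rewrite -[LHS](mulmxK hv.2) EAEP delta_mx_conj -scalemxAr -scalemxAl.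
Qed.

Lemma Es_A_Es_eq0 i j : (Es i *m A *m Es j == 0) = (Y i j == 0).
Proof.
rewrite Es_A_Es_coord scalemx_eq0.
by rewrite (negPf (conj_delta_mx_neq0 i j hv.2)) orbF.
Qed.

Lemma bipartite_diag_eq0 : bipartite Es A -> forall i, Y i i = 0.
Proof.
move=> hbip i; have := hbip i.
have -> : Es i *m A = Es i *m Es i *m A by rewrite hEs.1 eqxx.
rewrite -mulmxA mxtrace_mulC Es_A_Es_coord mxtraceZ mxtrace_mulC mulmxA.
rewrite mulVmx ?hv.2 // mul1mx /mxtrace (bigD1 i) //= big1 => [|k /negPf nk].
  by rewrite mxE !eqxx addr0 mulr1.
by rewrite mxE nk.
Qed.

Lemma represents_hollow_tridiagonal :
  (forall i j : 'I_d.+1, (i.+1 < j)%N || (j.+1 < i)%N -> Es i *m A *m Es j = 0) ->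
  bipartite Es A -> hollow_tridiagonal Y.
Proof.
move=> hfar hbip a b; case: (eqVneq a b) => [<- _|nab]; first exact: bipartite_diag_eq0.
move=> nadj; apply/eqP; rewrite -Es_A_Es_eq0 hfar //.
by move: nab; rewrite -val_eqE /=; lia.
Qed.

Hypothesis hnear :
  forall i j : 'I_d.+1, (i.+1 == j) || (j.+1 == i) -> Es i *m A *m Es j != 0.

Lemma represents_bcoef_neq0 k : (k < d)%N -> bcoef Y k != 0.
Proof.
by move=> kd; rewrite /bcoef kd -Es_A_Es_eq0 hnear // !inordK ?eqxx //; lia.
Qed.

Lemma represents_ccoef_neq0 k : (0 < k <= d)%N -> ccoef Y k != 0.
Proof.
move=> kd; rewrite /ccoef kd -Es_A_Es_eq0 hnear // !inordK ?orbT ?eqxx //; lia.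
Qed.

End EsBasis.

Lemma cosine_seq_unique (F : fieldType) d (Y : 'M[F]_d.+1) th0 (al z : nat -> F) :
  (forall k, (k < d)%N -> bcoef Y k != 0) -> cosine_seq Y th0 al ->
  (forall k, (k < d)%N -> ccoef Y k * z k.-1 + bcoef Y k * z k.+1 = th0 * z k) ->
  forall k, (k <= d)%N -> z k = z 0%N * al k.
Proof.
move=> hb [al0 hal] hz; elim/ltn_ind => -[|k] IH hk; first by rewrite al0 mulr1.
have kd : (k < d)%N by lia.
have zk : z k = z 0%N * al k by apply: IH; lia.
have zk1 : z k.-1 = z 0%N * al k.-1 by apply: IH; lia.
apply: (mulfI (hb k kd)); apply/eqP; rewrite -subr_eq0; apply/eqP.
transitivity ((ccoef Y k * z k.-1 + bcoef Y k * z k.+1 - th0 * z k)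
  - z 0%N * (ccoef Y k * al k.-1 + bcoef Y k * al k.+1 - th0 * al k)).
  by rewrite zk zk1; ring.
by rewrite hz // hal // !subrr mulr0 subr0.
Qed.

Section Tridiagonal.
Variables (F : fieldType) (d : nat) (Y : 'M[F]_d.+1).

Lemma bcoef_ccoef_entries (a b : 'I_d.+1) :
  b = a.+1 :> nat -> Y a b = bcoef Y a /\ Y b a = ccoef Y b.
Proof.
move=> hab; have ltbd := ltn_ord b.
rewrite /bcoef /ccoef ifT; last by lia.
rewrite ifT; last by lia.
have -> : inord a.+1 = b by apply: val_inj; rewrite /= inordK -hab.
have -> : inord b.-1 = a by apply: val_inj; rewrite /= inordK hab //; lia.
by rewrite !inord_val.
Qed.

Hypothesis hY : hollow_tridiagonal Y.

Lemma tridiag_mulmx_entry (z : 'cV[F]_d.+1) (i : 'I_d.+1) :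
  (Y *m z) i 0 = ccoef Y i * z (inord i.-1) 0 + bcoef Y i * z (inord i.+1) 0.
Proof.
have ltid := ltn_ord i; rewrite mxE.
have split_term j : Y i j * z j 0 =
    (if j.+1 == i then Y i j * z j 0 else 0) + (if i.+1 == j then Y i j * z j 0 else 0).
  case: eqP => h1; case: eqP => h2 /=; rewrite ?addr0 ?add0r //; first lia.
  by rewrite hY ?mul0r //; apply/negP => /orP[] /eqP.
rewrite (eq_bigr _ (fun j _ => split_term j)) big_split /= -!big_mkcond /=.
congr (_ + _).
- rewrite /ccoef; case: (posnP i) => [i0|ip].
    by rewrite i0 mul0r big_pred0 // => j; apply/eqP; lia.
  rewrite ifT; last by lia.
  rewrite (big_pred1 (inord i.-1)) ?inord_val // => j /=.
  by rewrite -val_eqE /= inordK; [apply/eqP/eqP|]; lia.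
- rewrite /bcoef; case: (ltnP i d) => [id|id].
    rewrite (big_pred1 (inord i.+1)) ?inord_val // => j /=.
    by rewrite -val_eqE /= inordK; [apply/eqP/eqP|]; lia.
  by rewrite mul0r big_pred0 // => j; apply/eqP; have := ltn_ord j; lia.
Qed.

Lemma tridiag_eigenvector_cosine th0 al (z : 'cV[F]_d.+1) :
  (forall k, (k < d)%N -> bcoef Y k != 0) -> cosine_seq Y th0 al ->
  Y *m z = th0 *: z -> z = z ord0 0 *: \col_j al j.
Proof.
move=> hb hal hz.
have rec k : (k < d)%N ->
    ccoef Y k * z (inord k.-1) 0 + bcoef Y k * z (inord k.+1) 0 = th0 * z (inord k) 0.
  move=> kd; have := tridiag_mulmx_entry z (inord k).
  by rewrite hz mxE inordK; [move<-|lia].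
apply/matrixP => a b; rewrite ord1 !mxE -(inord_val ord0).
by rewrite -(cosine_seq_unique hb hal rec) ?inord_val //; have := ltn_ord a; lia.
Qed.

Definition symmetrizer : 'M[F]_d.+1 :=
  diag_mx (\row_(j < d.+1) \prod_(m < j) (bcoef Y m / ccoef Y m.+1)).

Hypotheses (hb : forall k, (k < d)%N -> bcoef Y k != 0)
           (hc : forall k, (0 < k <= d)%N -> ccoef Y k != 0).

Lemma symmetrizer_unit : symmetrizer \in unitmx.
Proof.
rewrite unitmxE det_diag unitfE; apply/prodf_neq0 => j _; rewrite mxE.
apply/prodf_neq0 => m _; have := ltn_ord m; have := ltn_ord j => ? ?.
by rewrite mulf_neq0 ?invr_eq0 ?hb ?hc //; lia.
Qed.

Lemma trmx_mul_symmetrizer : Y^T *m symmetrizer = symmetrizer *m Y.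
Proof.
apply/matrixP => a b; rewrite mul_mx_diag mul_diag_mx !mxE.
case: (eqVneq (b : nat) a.+1) => [e|n1].
  have [-> ->] := bcoef_ccoef_entries e; rewrite e big_ord_recr /=.
  have cz : ccoef Y a.+1 != 0 by apply: hc; have := ltn_ord b; lia.
  by field.
case: (eqVneq (a : nat) b.+1) => [e|n2].
  have [-> ->] := bcoef_ccoef_entries e; rewrite e big_ord_recr /=.
  have cz : ccoef Y b.+1 != 0 by apply: hc; have := ltn_ord a; lia.
  by field.
case: (eqVneq a b) => [->|nab]; first by rewrite mulrC.
by rewrite !hY ?mul0r ?mulr0 //; move: nab; rewrite -val_eqE /=; lia.
Qed.

End Tridiagonal.

Section PrimitiveIdempotents.
Variables (F : fieldType) (n : nat) (A : 'M[F]_n.+1).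
Variables (th : nat -> F) (E : 'I_n.+1 -> 'M[F]_n.+1).
Hypothesis hmf : mult_free_prim_idem A th E.

Lemma prim_idem_mul j : E j *m A = th j *: E j.
Proof.
have [_ [hEE [hsum [_ hAE]]]] := hmf.
rewrite -[E j *m A]mulmx1 -hsum mulmx_sumr (bigD1 j) //= big1 ?addr0.
  by rewrite -mulmxA hAE -scalemxAr hEE eqxx.
by move=> k nk; rewrite -mulmxA hAE -scalemxAr hEE eq_sym (negPf nk) scaler0.
Qed.

Lemma prim_idem0_annihilator (B : 'M[F]_n.+1) :
  (forall j : 'I_n.+1, (1 < j)%N -> E ord0 *m B *m E j = 0) ->
  E ord0 *m B *m ((A - (th 1%N)%:M) *m (A - (th 0%N)%:M)) = 0.
Proof.
move=> hB; rewrite -[E ord0 *m B]mulmx1 -hmf.2.2.1 mulmx_sumr mulmx_suml.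
apply: big1 => j _; case: (ltnP 1 j) => [j1|j1]; first by rewrite hB // mul0mx.
have shift c : E j *m (A - c%:M) = (th j - c) *: E j.
  by rewrite mulmxBr prim_idem_mul mul_mx_scalar scalerBl.
rewrite -mulmxA [E j *m _]mulmxA shift -scalemxAl shift scalerA.
have [->|->] : (j : nat) = 0%N \/ (j : nat) = 1%N by lia.
  by rewrite subrr mulr0 scale0r mulmx0.
by rewrite subrr mul0r scale0r mulmx0.
Qed.

End PrimitiveIdempotents.

Lemma conj_left_eigenvector (F : fieldType) n (P A Y B D E0 : 'M[F]_n) (th a : F) :
  P \in unitmx -> A *m P = P *m Y -> B *m P = P *m D ->
  E0 *m A = th *: E0 -> E0 != 0 -> E0 *m B *m ((A - a%:M) *m (A - th%:M)) = 0 ->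
  exists2 x : 'cV[F]_n, x != 0 &
    Y^T *m x = th *: x /\ (Y^T - th%:M) *m ((Y^T - a%:M) *m (D^T *m x)) = 0.
Proof.
move=> uP hAP hBP hE0A E0nz hE0B.
pose cnj M := invmx P *m M *m P.
have cnjM M N : cnj (M *m N) = cnj M *m cnj N by rewrite /cnj !mulmxA mulmxK.
have YE : Y = cnj A by rewrite /cnj -mulmxA hAP mulKmx.
have DE : D = cnj B by rewrite /cnj -mulmxA hBP mulKmx.
have shiftE c : Y - c%:M = cnj (A - c%:M).
  by rewrite YE /cnj mulmxBr mulmxBl mul_mx_scalar -scalemxAl mulVmx // scalemx1.
have ZY : cnj E0 *m Y = th *: cnj E0.
  by rewrite YE -cnjM hE0A /cnj -scalemxAr -scalemxAl.
have ZDY : cnj E0 *m D *m (Y - a%:M) *m (Y - th%:M) = 0.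
  by rewrite DE !shiftE -!cnjM -mulmxA hE0B /cnj mulmx0 mul0mx.
have Znz : cnj E0 != 0.
  have E0E : E0 = P *m cnj E0 *m invmx P.
    by rewrite /cnj !mulmxA mulmxV // mul1mx mulmxK.
  by apply: contra E0nz => /eqP Z0; rewrite E0E Z0 mulmx0 mul0mx.
have [r Zr] : exists r, row r (cnj E0) != 0.
  case: (pickP (fun r => row r (cnj E0) != 0)) => [r Zr|Z0]; first by exists r.
  by case/eqP: Znz; apply/row_matrixP => r; rewrite row0; apply/eqP/negbFE/Z0.
exists (row r (cnj E0))^T.
  by apply: contra Zr => /eqP/(congr1 trmx); rewrite trmxK trmx0 => ->.
have trshift c : (Y - c%:M)^T = Y^T - c%:M by rewrite linearB /= tr_scalar_mx.
split; first by rewrite -trmx_mul -row_mul ZY linearZ /= linearZ.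
by rewrite -!trshift -!trmx_mul -!row_mul ZDY row0 trmx0.
Qed.

Lemma symmetrize_left_eigenvector (F : fieldType) d (Y : 'M[F]_d.+1) th0 a al
    (s : 'rV[F]_d.+1) :
  hollow_tridiagonal Y -> (forall k, (k < d)%N -> bcoef Y k != 0) ->
  (forall k, (0 < k <= d)%N -> ccoef Y k != 0) -> cosine_seq Y th0 al ->
  (exists2 x : 'cV[F]_d.+1, x != 0 & Y^T *m x = th0 *: x /\
     (Y^T - th0%:M) *m ((Y^T - a%:M) *m ((diag_mx s)^T *m x)) = 0) ->
  (Y - th0%:M) *m ((Y - a%:M) *m (diag_mx s *m \col_j al j)) = 0.
Proof.
move=> hY hb hc hal [x xnz [hx hDx]].
have uK := symmetrizer_unit hb hc; have YK := trmx_mul_symmetrizer hY hc.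
set K := symmetrizer Y in uK YK.
have shiftK c : (Y^T - c%:M) *m K = K *m (Y - c%:M).
  by rewrite mulmxBl mulmxBr YK scalar_mxC.
pose y := invmx K *m x; have xE : x = K *m y by rewrite mulKVmx.
have hy : Y *m y = th0 *: y.
  apply: (can_inj (mulKmx uK)).
  by rewrite mulmxA -YK -mulmxA -xE hx xE scalemxAr.
have yE := tridiag_eigenvector_cosine hY hb hal hy.
have y0nz : y ord0 0 != 0.
  by apply: contra xnz => /eqP y0; rewrite xE yE y0 scale0r mulmx0.
have DK : diag_mx s *m K = K *m diag_mx s by rewrite diag_mxC.
move: hDx; rewrite tr_diag_mx xE [diag_mx s *m _]mulmxA DK -mulmxA.
rewrite [(Y^T - a%:M) *m _]mulmxA shiftK.
rewrite -mulmxA [(Y^T - th0%:M) *m _]mulmxA shiftK -mulmxA.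
move/(congr1 (mulmx (invmx K))); rewrite mulKmx // mulmx0 yE -!scalemxAr.
by move/eqP; rewrite scalemx_eq0 (negPf y0nz) => /eqP.
Qed.

Lemma dual_cosine_recurrence (F : fieldType) d (Y : 'M[F]_d.+1) th0 a al
    (ths : nat -> F) :
  hollow_tridiagonal Y -> (forall k, (k < d)%N -> bcoef Y k != 0) ->
  cosine_seq Y th0 al ->
  (Y - th0%:M) *m ((Y - a%:M) *m (diag_mx (\row_j ths j) *m \col_j al j)) = 0 ->
  forall k, (k < d)%N ->
    ccoef Y k * (ths k.-1 * al k.-1) + bcoef Y k * (ths k.+1 * al k.+1)
      - a * (ths k * al k) = (bcoef Y 0 * (ths 1%N * al 1%N) - a * ths 0%N) * al k.
Proof.
move=> hY hb hal hw k kd.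
pose h := (Y - a%:M) *m (diag_mx (\row_j ths j) *m \col_j al j).
have hh : Y *m h = th0 *: h.
  by apply/eqP; rewrite -subr_eq0 -mul_scalar_mx -mulmxBl hw.
have hE := tridiag_eigenvector_cosine hY hb hal hh.
have hj j : (j < d)%N -> h (inord j) 0 =
    ccoef Y j * (ths j.-1 * al j.-1) + bcoef Y j * (ths j.+1 * al j.+1)
      - a * (ths j * al j).
  move=> jd; rewrite /h mulmxBl mul_scalar_mx mxE (tridiag_mulmx_entry hY).
  by rewrite mul_diag_mx !mxE !inordK //; lia.
have h0 : h ord0 0 = bcoef Y 0 * (ths 1%N * al 1%N) - a * ths 0%N.
  rewrite -(inord_val ord0) hj /=; last lia.
  by rewrite /ccoef mul0r add0r hal.1 mulr1.
by rewrite -hj // -h0 {1}hE !mxE inordK //; lia.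
Qed.

Lemma normalizing_cosine_neq0 (F : fieldType) d (Es : 'I_d.+1 -> 'M[F]_d.+1) v
    (A Y : 'M[F]_d.+1) th0 al :
  orth_rank1_idempotents Es -> Es_basis Es v -> represents A v Y ->
  hollow_tridiagonal Y -> (forall k, (k < d)%N -> bcoef Y k != 0) ->
  cosine_seq Y th0 al -> normalizing Es A th0 ->
  forall k, (k <= d)%N -> al k != 0.
Proof.
move=> hEs hv hr hY hb hal [v' [Y' [hv' hr' hrow]]] k kd.
pose q : 'cV[F]_d.+1 := basis_mx v' *m const_mx 1.
have hq : A *m q = th0 *: q.
  rewrite /q mulmxA hr' -mulmxA scalemxAr; congr (_ *m _).
  apply/matrixP => a b; rewrite !mxE -(hrow a) mulr1; apply: eq_bigr => j _.
  by rewrite !mxE mulr1.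
pose z := invmx (basis_mx v) *m q.
have qE : q = basis_mx v *m z by rewrite mulKVmx ?hv.2.
have hz : Y *m z = th0 *: z.
  apply: (can_inj (mulKmx hv.2)).
  by rewrite mulmxA -hr -mulmxA -qE hq qE scalemxAr.
have : Es (inord k) *m q != 0 by rewrite /q Es_mul_coord_eq0 // mxE oner_eq0.
rewrite qE Es_mul_coord_eq0 // (tridiag_eigenvector_cosine hY hb hal hz) !mxE inordK //.
by rewrite mulf_eq0 negb_or => /andP[].
Qed.

Lemma intersection_numbers_solve (F : fieldType) (th0 th1 b c b0 : F)
    (al ths : nat -> F) i :
  ths i.+1 != ths i.-1 -> al i.+1 != 0 -> al i.-1 != 0 ->
  c * al i.-1 + b * al i.+1 = th0 * al i -> b0 * al 1%N = th0 ->
  c * (ths i.-1 * al i.-1) + b * (ths i.+1 * al i.+1) - th1 * (ths i * al i)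
    = (b0 * (ths 1%N * al 1%N) - th1 * ths 0%N) * al i ->
  b = (th1 * (ths i - ths 0%N) - th0 * (ths i.-1 - ths 1%N))
        / (ths i.+1 - ths i.-1) * (al i / al i.+1) /\
  c = (th0 * (ths i.+1 - ths 1%N) - th1 * (ths i - ths 0%N))
        / (ths i.+1 - ths i.-1) * (al i / al i.-1).
Proof.
rewrite -subr_eq0 => sn ap am hrec hb0 hdual.
have eB : b * al i.+1 * (ths i.+1 - ths i.-1) =
    (th1 * (ths i - ths 0%N) - th0 * (ths i.-1 - ths 1%N)) * al i.
  apply/eqP; rewrite -subr_eq0; apply/eqP.
  transitivity ((c * (ths i.-1 * al i.-1) + b * (ths i.+1 * al i.+1) - th1 * (ths i * al i)
      - (b0 * (ths 1%N * al 1%N) - th1 * ths 0%N) * al i)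
    - ths i.-1 * (c * al i.-1 + b * al i.+1 - th0 * al i)
    + ths 1%N * al i * (b0 * al 1%N - th0)); first by ring.
  by rewrite hdual hrec hb0 !subrr; ring.
have eC : c * al i.-1 * (ths i.+1 - ths i.-1) =
    (th0 * (ths i.+1 - ths 1%N) - th1 * (ths i - ths 0%N)) * al i.
  have -> : c * al i.-1 = th0 * al i - b * al i.+1 by rewrite -hrec; ring.
  by rewrite mulrBl eB; ring.
split.
  by apply: (mulIf (mulf_neq0 ap sn)); rewrite mulrA eB; field; apply/andP.
by apply: (mulIf (mulf_neq0 am sn)); rewrite mulrA eC; field; apply/andP.
Qed.

Theorem lemma7p6 (F : fieldType) (d : nat) (Hd : (3 <= d)%N)
  (Es : 'I_d.+1 -> 'M[F]_d.+1) (A : 'M[F]_d.+1)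
  (E : 'I_d.+1 -> 'M[F]_d.+1) (th ths : nat -> F)
  (v : 'I_d.+1 -> 'cV[F]_d.+1) (Y : 'M[F]_d.+1) (al : nat -> F) :
  orth_rank1_idempotents Es ->
  (forall i j : 'I_d.+1, (i.+1 < j)%N || (j.+1 < i)%N -> Es i *m A *m Es j = 0) ->
  (forall i j : 'I_d.+1, (i.+1 == j) || (j.+1 == i) -> Es i *m A *m Es j != 0) ->
  mult_free_prim_idem A th E ->
  bipartite Es A ->
  (forall i j : 'I_d.+1, i != j -> ths i != ths j) ->
  let As := \sum_(i < d.+1) ths i *: Es i in
  normalizing Es A (th 0%N) ->
  (* in Delta, E_0 is adjacent to E_1 and to no other vertex *)
  E ord0 *m As *m E (inord 1) != 0 ->
  (forall j : 'I_d.+1, (1 < j)%N -> E ord0 *m As *m E j = 0) ->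
  Es_basis Es v ->
  represents A v Y ->
  cosine_seq Y (th 0%N) al ->
  forall i : nat, (1 <= i <= d - 1)%N ->
    bcoef Y i = (th 1%N * (ths i - ths 0%N) - th 0%N * (ths i.-1 - ths 1%N))
                 / (ths i.+1 - ths i.-1) * (al i / al i.+1)
    /\
    ccoef Y i = (th 0%N * (ths i.+1 - ths 1%N) - th 1%N * (ths i - ths 0%N))
                 / (ths i.+1 - ths i.-1) * (al i / al i.-1).
Proof.
move=> hEs hfar hnear hmf hbip hths As hnorm _ hD0 hv hr hal i hi.
have hY := represents_hollow_tridiagonal hEs hv hr hfar hbip.
have hb := represents_bcoef_neq0 hEs hv hr hnear.
have hc := represents_ccoef_neq0 hEs hv hr hnear.
have alnz := normalizing_cosine_neq0 hEs hv hr hY hb hal hnorm.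
have hw : (Y - (th 0%N)%:M) *m ((Y - (th 1%N)%:M) *m
    (diag_mx (\row_j ths j) *m \col_j al j)) = 0.
  apply: symmetrize_left_eigenvector hY hb hc hal _.
  apply: (conj_left_eigenvector hv.2 hr (dual_mul_basis_mx hEs hv ths)).
  - exact: prim_idem_mul hmf ord0.
  - exact: hmf.2.2.2.1 ord0.
  - exact: (prim_idem0_annihilator hmf hD0).
have hb0 : bcoef Y 0 * al 1%N = th 0%N.
  by have := hal.2 0%N; rewrite /ccoef /= mul0r add0r hal.1 mulr1; apply; lia.
have hdual := dual_cosine_recurrence hY hb hal hw.
apply: (intersection_numbers_solve _ _ _ _ hb0 (hdual i _)).
- have := hths (inord i.+1) (inord i.-1).
  by rewrite -val_eqE /= !inordK //; [apply|..]; lia.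
- by apply: alnz; lia.
- by apply: alnz; lia.
- by apply: hal.2; lia.
- lia.
Qed.
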